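(* Let $R$ be a ring satisfying (C): every subring of $Q_{\max}^r(R)$ containing $R$ is flat as a left $R$-module, and (C'): every subring of $Q_{\max}^r(R)$ containing $R$ is flat as a right $R$-module. Then $Q_\omega=Q_{\mathrm{tot}}^r(R)$, where $\omega$ is the first infinite ordinal and $Q_\omega$ is defined in the context. In particular, every commutative ring $R$ satisfying (C) has $Q_\omega=Q_{\mathrm{tot}}^r(R)$.
   Context: Rings are associative with unit. For a Gabriel filter $\mathcal{E}$ of right ideals of $R$ (with associated hereditary torsion theory and torsion submodule $\mathcal{T}R$ of $R$), $R_{\mathcal{E}}=\varinjlim_{I\in\mathcal{E}}\mathrm{Hom}_R(I,R/\mathcal{T}R)$ is the right ring of quotients. Define, for ordinals $\alpha$, subrings $Q_\alpha$ of $Q_{\max}^r(R)$ containing $R$: $Q_0=Q_{\max}^r(R)$ with filter $\mathcal{E}_0$ the dense right ideals; $\mathcal{E}_{\alpha+1}=\{I: IQ_\alpha=Q_\alpha\}$ (the Gabriel filter of the torsion theory whose torsion modules are the $M$ with $M\otimes_R Q_\alpha=0$) and $Q_{\alpha+1}=R_{\mathcal{E}_{\alpha+1}}$; for limit $\alpha$, $\mathcal{E}_\alpha=\bigcap_{\beta<\alpha}\mathcal{E}_\beta$ and $Q_\alpha=R_{\mathcal{E}_\alpha}=\bigcap_{\beta<\alpha}Q_\beta$. In particular $Q_\omega=\bigcap_{n\ge0}Q_n$. $Q_{\mathrm{tot}}^r(R)$ is the total right ring of quotients: the largest ring extension $S\subseteq Q_{\max}^r(R)$ of $R$ such that $R\to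 S$ is a ring epimorphism and $S$ is flat as a left $R$-module. *)

(* Noncommutative rings R with unit; right R-modules are
   modelled as left modules over the converse ring R^c. *)
From HB Require Import structures.
From mathcomp Require Import all_boot all_order all_algebra.
Set Implicit Arguments. Unset Strict Implicit. Unset Printing Implicit Defensive.
Import GRing.Theory.
Local Open Scope ring_scope.

Section Quotients.
Variables (R Q : nzRingType) (phi : {rmorphism R -> Q}).

Definition right_ideal (I : R -> Prop) : Prop :=
  [/\ I 0, (forall x y, I x -> I y -> I (x - y)) & (forall x r, I x -> I (x * r))].

Definition dense_right_ideal (I : R -> Prop) : Prop :=
  right_ideal I /\
  forall x y : R, x != 0 -> exists r : R, x * r != 0 /\ I (y * r).

(* Q (with the embedding phi) is the maximal right ring of quotients of R
   (Utumi/Lambek characterisation: Q_R is a rational extension of R_R, and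
   every R-homomorphism from a dense right ideal into R is left
   multiplication by an element of Q). *)
Definition is_Qmax : Prop :=
  [/\ injective phi,
      (forall p q : Q, p != 0 ->
         exists r : R, p * phi r != 0 /\ exists s : R, q * phi r = phi s)
    & (forall (I : R -> Prop) (f : R -> R), dense_right_ideal I ->
         (forall x y, I x -> I y -> f (x + y) = f x + f y) ->
         (forall x r, I x -> f (x * r) = f x * r) ->
         exists q : Q, forall x, I x -> q * phi x = phi (f x))].

Definition subring_over (S : Q -> Prop) : Prop :=
  [/\ (forall r : R, S (phi r)),
      (forall x y, S x -> S y -> S (x - y))
    & (forall x y, S x -> S y -> S (x * y))].

(* For a right R-module M (left R^c-module) and S viewed as left R-module
   (r . s = phi r * s), a formal sum sum_i m_i (x) s_i is zero in M (x)_R S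
   iff every R-balanced map M x S -> A into an abelian group kills it. *)
Definition tensorL_zero (M : lmodType R^c) (S : Q -> Prop) (t : seq (M * Q))
  : Prop :=
  forall (A : zmodType) (b : M -> Q -> A),
    (forall m m' s, S s -> b (m + m') s = b m s + b m' s) ->
    (forall m s s', S s -> S s' -> b m (s + s') = b m s + b m s') ->
    (forall (r : R) m s, S s -> b ((r : R^c) *: m) s = b m (phi r * s)) ->
    \sum_(p <- t) b p.1 p.2 = 0.

Definition tensorR_zero (M : lmodType R) (S : Q -> Prop) (t : seq (Q * M))
  : Prop :=
  forall (A : zmodType) (b : Q -> M -> A),
    (forall s m m', S s -> b s (m + m') = b s m + b s m') ->
    (forall s s' m, S s -> S s' -> b (s + s') m = b s m + b s' m) ->
    (forall (r : R) s m, S s -> b (s * phi r) m = b s (r *: m)) ->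
    \sum_(p <- t) b p.1 p.2 = 0.

(* S is flat as a left R-module: - (x)_R S preserves monomorphisms *)
Definition flat_left (S : Q -> Prop) : Prop :=
  forall (M N : lmodType R^c) (g : {linear M -> N}), injective g ->
  forall t : seq (M * Q), (forall p, p \in t -> S p.2) ->
    tensorL_zero S [seq (g p.1, p.2) | p <- t] -> tensorL_zero S t.

Definition flat_right (S : Q -> Prop) : Prop :=
  forall (M N : lmodType R) (g : {linear M -> N}), injective g ->
  forall t : seq (Q * M), (forall p, p \in t -> S p.1) ->
    tensorR_zero S [seq (p.1, g p.2) | p <- t] -> tensorR_zero S t.

Definition condC : Prop := forall S, subring_over S -> flat_left S.
Definition condC' : Prop := forall S, subring_over S -> flat_right S.

Definition rhom_on (T : nzRingType) (S : Q -> Prop) (f : Q -> T) : Prop :=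
  f 1 = 1 /\ forall x y, S x -> S y -> f (x + y) = f x + f y /\ f (x * y) = f x * f y.

Definition ring_epi (S : Q -> Prop) : Prop :=
  forall (T : nzRingType) (f g : Q -> T), rhom_on S f -> rhom_on S g ->
    (forall r : R, f (phi r) = g (phi r)) -> forall s, S s -> f s = g s.

Definition flat_epi_subring (S : Q -> Prop) : Prop :=
  [/\ subring_over S, ring_epi S & flat_left S].

Definition is_Qtot (S : Q -> Prop) : Prop :=
  flat_epi_subring S /\
  forall S' : Q -> Prop, flat_epi_subring S' -> forall q, S' q -> S q.

(* I Q_alpha = Q_alpha  (I Q_alpha = finite sums of phi(i) q, i in I, q in Q_alpha) *)
Definition IP_eq (I : R -> Prop) (P : Q -> Prop) : Prop :=
  (forall t : seq (R * Q), (forall p, p \in t -> I p.1 /\ P p.2) ->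
     P (\sum_(p <- t) phi p.1 * p.2)) /\
  (forall q, P q -> exists t : seq (R * Q),
     (forall p, p \in t -> I p.1 /\ P p.2) /\ q = \sum_(p <- t) phi p.1 * p.2).

Definition E_next (P : Q -> Prop) (I : R -> Prop) : Prop :=
  right_ideal I /\ IP_eq I P.

(* R_E realised inside Q_max: the q in Q with q I contained in R for some I in E *)
Definition R_E (E : (R -> Prop) -> Prop) (q : Q) : Prop :=
  exists I : R -> Prop, E I /\ forall x, I x -> exists s : R, q * phi x = phi s.

Fixpoint Qn (n : nat) : Q -> Prop :=
  match n with
  | 0 => fun _ => True
  | n'.+1 => R_E (E_next (Qn n'))
  end.

Definition Qomega (q : Q) : Prop := forall n, Qn n q.

End Quotients.

(** Write E(P) = {I : I P = P} for a subring P of Q.  If P is flat, E(P) is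
    closed under (I1, I2) ↦ I2 ∩ (I1 : q) whenever q I2 ⊆ R: for b ∈ I2 the
    class of q b in Q/I1 vanishes in (Q/I1) ⊗ P, and flatness pulls this back
    to the cyclic submodule it generates, i.e. to R/ann.  Hence every Q_n, and
    so Q_ω, is a subring of Q, flat by (C).
    For s ∈ Q_1 we have s ⊗ 1 = 1 ⊗ s in Q ⊗_R Q; left flatness of Q (C) and
    right flatness of Q_ω (C') pull this identity back to Q_ω ⊗_R Q_ω, so
    R → Q_ω is an epimorphism.
    Conversely, a flat epimorphic S has q ⊗ 1 = 1 ⊗ q in S ⊗_R S for q ∈ S, so
    the class of q vanishes in (Q/R) ⊗ S; flatness transports this to R/I with
    I = {x : q x ∈ R}, so I S = S, and induction gives S ⊆ Q_n for all n.
    For commutative R the image of R is central in Q_max, so left and right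
    flatness agree and (C) implies (C'). *)

From HB Require Import structures.
From mathcomp Require Import all_boot all_order all_algebra.
From mathcomp Require Import boolp.
Set Implicit Arguments. Unset Strict Implicit. Unset Printing Implicit Defensive.
Import GRing.Theory.
Local Open Scope ring_scope.
Local Open Scope quotient_scope.

(** * Quotient modules *)

Section QuotientModule.
Variables (K : pzRingType) (V : lmodType K).

Record submod := Submod {
  submod_mem :> V -> Prop;
  submod0 : submod_mem 0;
  submodB : forall x y, submod_mem x -> submod_mem y -> submod_mem (x - y);
  submodZ : forall a x, submod_mem x -> submod_mem (a *: x) }.

Variable U : submod.

Definition submod_pred : {pred V} := fun x => `[< U x >].

Fact submod_pred_zmod_closed : zmod_closed submod_pred.
Proof.
split=> [|x y /asboolP Ux /asboolP Uy]; apply/asboolP; first exact: submod0.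
exact: submodB.
Qed.
HB.instance Definition _ :=
  GRing.isZmodClosed.Build V submod_pred submod_pred_zmod_closed.

Local Notation quotmod := (Quotient.quot submod_pred).

Lemma quotmod_eqP (x y : V) : \pi_quotmod x = \pi y <-> U (x - y).
Proof. by rewrite (rwP eqP) -Quotient.idealrBE; split=> /asboolP. Qed.

Definition quotmod_scale (a : K) := lift_op1 quotmod ( *:%R a).

Lemma pi_scale a : {morph \pi_quotmod : x / a *: x >-> quotmod_scale a x}.
Proof.
move=> x; unlock quotmod_scale; apply/quotmod_eqP.
by rewrite -scalerBr; apply: submodZ; apply/quotmod_eqP; rewrite reprK.
Qed.
Canonical pi_scale_morph a := PiMorph1 (pi_scale a).

Fact quotmod_scaleA a b (x : quotmod) :
  quotmod_scale a (quotmod_scale b x) = quotmod_scale (a * b) x.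
Proof. by elim/quotW: x => x; rewrite !piE scalerA. Qed.
Fact quotmod_scale1 : left_id 1 quotmod_scale.
Proof. by elim/quotW=> x; rewrite !piE scale1r. Qed.
Fact quotmod_scaleDr : right_distributive quotmod_scale +%R.
Proof.
by move=> a; elim/quotW=> x; elim/quotW=> y; rewrite -raddfD !piE scalerDr raddfD.
Qed.
Fact quotmod_scaleDl (x : quotmod) : {morph quotmod_scale^~ x : a b / a + b}.
Proof. by move=> a b; elim/quotW: x => x; rewrite !piE scalerDl raddfD. Qed.
HB.instance Definition _ := GRing.Zmodule_isLmodule.Build K quotmod
  quotmod_scaleA quotmod_scale1 quotmod_scaleDr quotmod_scaleDl.
HB.instance Definition _ := GRing.isScalable.Build K V quotmod *:%R \pi_quotmod pi_scale.

Lemma quotmod_eq0 x : \pi_quotmod x = 0 <-> U x.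
Proof. by rewrite -(raddf0 \pi_quotmod) quotmod_eqP subr0. Qed.

Lemma quotmod_repr (m : quotmod) x : m = \pi x -> U (repr m - x).
Proof. by move=> ->; apply/quotmod_eqP; rewrite reprK. Qed.
End QuotientModule.
Notation quotmod U := (Quotient.quot (submod_pred U)).

Section Coimage.
Variables (K : pzRingType) (V W : lmodType K) (h : {linear V -> W}).

Definition kersub : submod V.
Proof.
apply: (@Submod _ _ (fun x => h x = 0)) => [|x y hx hy|a x hx]; first exact: linear0.
  by rewrite linearB /= hx hy subrr.
by rewrite linearZ /= hx scaler0.
Defined.

Definition coim_embed (m : quotmod kersub) : W := h (repr m).

Lemma coim_embedE x : coim_embed (\pi x) = h x.
Proof.
apply/eqP; rewrite -subr_eq0 -linearB; apply/eqP.
exact: (quotmod_repr (U := kersub)).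
Qed.

Fact coim_embed_is_linear : linear coim_embed.
Proof.
by move=> a; elim/quotW=> x; elim/quotW=> y; rewrite -linearP !coim_embedE linearP.
Qed.
HB.instance Definition _ :=
  GRing.isLinear.Build K (quotmod kersub) W *:%R coim_embed coim_embed_is_linear.

Lemma coim_embed_inj : injective coim_embed.
Proof.
elim/quotW=> x; elim/quotW=> y; rewrite !coim_embedE => hxy.
by apply/quotmod_eqP; rewrite /= linearB /= hxy subrr.
Qed.
End Coimage.
Arguments coim_embed : simpl never.
Notation coim h := (quotmod (kersub h)).

Section ScaleMaps.
Variables (K : pzRingType) (M : lmodType K).

Definition cyclic_map (m : M) (k : K^o) : M := (k : K) *: m.
Fact cyclic_map_is_linear m : linear (cyclic_map m).
Proof. by move=> a x y; rewrite /cyclic_map scalerDl scalerA. Qed.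
HB.instance Definition _ m :=
  GRing.isLinear.Build K K^o M *:%R (cyclic_map m) (cyclic_map_is_linear m).

Definition span2_map (m1 m2 : M) (k : K^o * K^o) : M :=
  (k.1 : K) *: m1 + (k.2 : K) *: m2.
Fact span2_map_is_linear m1 m2 : linear (span2_map m1 m2).
Proof.
move=> a [x1 x2] [y1 y2]; rewrite /span2_map /= !scalerDl scalerDr !scalerA.
by rewrite addrACA.
Qed.
HB.instance Definition _ m1 m2 := GRing.isLinear.Build K (K^o * K^o)%type M *:%R
  (span2_map m1 m2) (span2_map_is_linear m1 m2).
End ScaleMaps.

Lemma additive_on_sum (V W : zmodType) (P : V -> Prop) (c : V -> W) :
    P 0 -> (forall x y, P x -> P y -> P (x + y)) ->
    (forall x y, P x -> P y -> c (x + y) = c x + c y) ->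
  forall (I : eqType) (t : seq I) (F : I -> V), (forall i, i \in t -> P (F i)) ->
  c (\sum_(i <- t) F i) = \sum_(i <- t) c (F i).
Proof.
move=> P0 PD cD I t F tP; have c0 : c 0 = 0 by apply/(addrI (c 0)); rewrite -cD ?addr0.
rewrite big_seq [RHS]big_seq.
apply: proj2 (big_ind2 (fun x y => P x /\ c x = y) _ _ _) => // [x1 y1 x2 y2|i /tP //].
by move=> [Px1 <-] [Px2 <-]; split; [apply: PD | apply: cD].
Qed.

(** * Q as a right and as a left R-module *)

Section RightLeftModules.
Variables (R Q : nzRingType) (phi : {rmorphism R -> Q}).

Definition QR of {rmorphism R -> Q} : Type := Q.
HB.instance Definition _ := GRing.Zmodule.on (QR phi).
Definition QR_scale (r : R^c) (x : QR phi) : QR phi := (x : Q) * phi r.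
Fact QR_scaleA a b (x : QR phi) : QR_scale a (QR_scale b x) = QR_scale (a * b) x.
Proof. by rewrite /QR_scale -mulrA -rmorphM. Qed.
Fact QR_scale1 : left_id 1 QR_scale.
Proof. by move=> x; rewrite /QR_scale rmorph1 mulr1. Qed.
Fact QR_scaleDr : right_distributive QR_scale +%R.
Proof. by move=> a x y; rewrite /QR_scale mulrDl. Qed.
Fact QR_scaleDl (x : QR phi) : {morph QR_scale^~ x : a b / a + b}.
Proof. by move=> a b; rewrite /QR_scale rmorphD mulrDr. Qed.
HB.instance Definition _ := GRing.Zmodule_isLmodule.Build R^c (QR phi)
  QR_scaleA QR_scale1 QR_scaleDr QR_scaleDl.

Lemma QR_scaleE (r : R) (x : QR phi) : (r : R^c) *: x = (x : Q) * phi r :> Q.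
Proof. by []. Qed.

Definition RQ of {rmorphism R -> Q} : Type := Q.
HB.instance Definition _ := GRing.Zmodule.on (RQ phi).
Definition RQ_scale (r : R) (x : RQ phi) : RQ phi := phi r * (x : Q).
Fact RQ_scaleA a b (x : RQ phi) : RQ_scale a (RQ_scale b x) = RQ_scale (a * b) x.
Proof. by rewrite /RQ_scale mulrA -rmorphM. Qed.
Fact RQ_scale1 : left_id 1 RQ_scale.
Proof. by move=> x; rewrite /RQ_scale rmorph1 mul1r. Qed.
Fact RQ_scaleDr : right_distributive RQ_scale +%R.
Proof. by move=> a x y; rewrite /RQ_scale mulrDr. Qed.
Fact RQ_scaleDl (x : RQ phi) : {morph RQ_scale^~ x : a b / a + b}.
Proof. by move=> a b; rewrite /RQ_scale rmorphD mulrDl. Qed.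
HB.instance Definition _ := GRing.Zmodule_isLmodule.Build R (RQ phi)
  RQ_scaleA RQ_scale1 RQ_scaleDr RQ_scaleDl.

Lemma RQ_scaleE (r : R) (x : RQ phi) : r *: x = phi r * (x : Q) :> Q.
Proof. by []. Qed.
End RightLeftModules.

Section Subrings.
Variables (R Q : nzRingType) (phi : {rmorphism R -> Q}) (S : Q -> Prop).
Hypothesis hS : subring_over phi S.

Lemma subring_over_phi r : S (phi r). Proof. by case: hS. Qed.
Lemma subring_overB x y : S x -> S y -> S (x - y). Proof. by case: hS => _ + _; apply. Qed.
Lemma subring_overM x y : S x -> S y -> S (x * y). Proof. by case: hS => _ _; apply. Qed.
Lemma subring_over0 : S 0. Proof. by rewrite -(rmorph0 phi); apply: subring_over_phi. Qed.
Lemma subring_over1 : S 1. Proof. by rewrite -(rmorph1 phi); apply: subring_over_phi. Qed.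
Lemma subring_overN x : S x -> S (- x).
Proof. by rewrite -sub0r; apply/subring_overB/subring_over0. Qed.
Lemma subring_overD x y : S x -> S y -> S (x + y).
Proof. by move=> Sx /subring_overN Sy; rewrite -[y]opprK; apply: subring_overB. Qed.
End Subrings.

(** * The products J P *)

Section IdealProducts.
Variables (R Q : nzRingType) (phi : {rmorphism R -> Q}).

Definition IP (J : R -> Prop) (P : Q -> Prop) (q : Q) : Prop :=
  exists t : seq (R * Q),
    (forall p, p \in t -> J p.1 /\ P p.2) /\ q = \sum_(p <- t) phi p.1 * p.2.

Lemma IP_sub (J J' : R -> Prop) (P P' : Q -> Prop) q :
  (forall x, J x -> J' x) -> (forall x, P x -> P' x) -> IP J P q -> IP J' P' q.
Proof.
move=> JJ' PP' [t [tJP ->]]; exists t; split=> // p /tJP[].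
by split; [apply: JJ' | apply: PP'].
Qed.

Lemma IP_phiMl (J : R -> Prop) (P : Q -> Prop) b q :
  IP (fun x => J (b * x)) P q -> IP J P (phi b * q).
Proof.
move=> [t [tJP ->]]; exists [seq (b * p.1, p.2) | p <- t]; split.
  by move=> _ /mapP[p /tJP pJP ->].
by rewrite big_map mulr_sumr; apply: eq_bigr => p _; rewrite rmorphM mulrA.
Qed.

Section Closure.
Variables (J : R -> Prop) (P : Q -> Prop).
Hypothesis hP : subring_over phi P.

Lemma IP0 : IP J P 0.
Proof. by exists [::]; rewrite big_nil. Qed.

Lemma IPD x y : IP J P x -> IP J P y -> IP J P (x + y).
Proof.
move=> [t1 [t1JP ->]] [t2 [t2JP ->]]; exists (t1 ++ t2); rewrite big_cat.
by split=> // p; rewrite mem_cat => /orP[/t1JP | /t2JP].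
Qed.

Lemma IPMr x z : IP J P x -> P z -> IP J P (x * z).
Proof.
move=> [t [tJP ->]] Pz; exists [seq (p.1, p.2 * z) | p <- t]; split.
  by move=> _ /mapP[p /tJP[Jp Pp] ->]; split=> //; apply: (subring_overM hP).
by rewrite big_map mulr_suml; apply: eq_bigr => p _; rewrite mulrA.
Qed.

Lemma IPB x y : IP J P x -> IP J P y -> IP J P (x - y).
Proof.
move=> IPx IPy; apply: IPD => //; rewrite -mulrN1; apply: IPMr => //.
exact/(subring_overN hP)/(subring_over1 hP).
Qed.

Lemma IP_gen j p : J j -> P p -> IP J P (phi j * p).
Proof.
by move=> Jj Pp; exists [:: (j, p)]; rewrite big_seq1; split=> // q /[!inE] /eqP->.
Qed.

Lemma IP_subring q : IP J P q -> P q.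
Proof.
move=> [t [tJP ->]]; rewrite big_seq; apply: big_ind => [|x y|p /tJP[_ Pp]].
- exact: (subring_over0 hP).
- exact: (subring_overD hP).
- exact: (subring_overM hP (subring_over_phi hP _) Pp).
Qed.
End Closure.

Variable P : Q -> Prop.
Hypothesis hP : subring_over phi P.

Lemma IP_trans (J K : R -> Prop) q :
  (forall j, J j -> IP K P (phi j)) -> IP J P q -> IP K P q.
Proof.
move=> JK [t [tJP ->]]; rewrite big_seq; apply: big_ind => [|x y|p /tJP[Jp Pp]].
- exact: IP0.
- exact: IPD.
- exact: (IPMr hP (JK _ Jp) Pp).
Qed.

Lemma E_nextP I : E_next phi P I <-> right_ideal I /\ IP I P 1.
Proof.
split=> [[hI [_ IP_P]] | [hI IP1]]; first by split=> //; apply/IP_P/(subring_over1 hP).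
split=> //; split=> [t tIP | q Pq]; first by apply: (IP_subring (J := I) hP); exists t.
by rewrite -[q]mul1r; apply: IPMr.
Qed.

Definition IP_submod (J : R -> Prop) : submod (QR phi).
Proof.
refine (@Submod _ (QR phi) (IP J P) (IP0 J P) (@IPB J P hP) _).
exact: (fun a x IPx => IPMr hP IPx (subring_over_phi hP a)).
Defined.
End IdealProducts.

Section TensorVanishing.
Variables (R Q : nzRingType) (phi : {rmorphism R -> Q}) (P : Q -> Prop).
Hypothesis hP : subring_over phi P.

Lemma tensorL_zero_ann (M : lmodType R^c) (m : M) (J : R -> Prop) z :
  (forall j, J j -> (j : R^c) *: m = 0) -> IP phi J P 1 -> P z ->
  tensorL_zero phi P [:: (m, z)].
Proof.
move=> mJ [t [tJP e1]] Pz A b bDl bDr bZ; rewrite big_seq1 /=.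
have Pt p : p \in t -> P (p.2 * z) by move=> /tJP[_ Pp]; apply: (subring_overM hP).
have -> : z = \sum_(p <- t) phi p.1 * (p.2 * z).
  by rewrite -[LHS]mul1r e1 mulr_suml; apply: eq_bigr => p _; rewrite mulrA.
rewrite (additive_on_sum (subring_over0 hP) (subring_overD hP) (bDr m)); last first.
  by move=> p /Pt; apply: (subring_overM hP (subring_over_phi hP _)).
rewrite big_seq big1 // => p /[dup] /tJP[Jp _] /Pt Ppz.
by rewrite -bZ // mJ //; apply/(addrI (b 0 (p.2 * z))); rewrite -bDl // !addr0.
Qed.

(* The balanced map ([x], y) ↦ [φ(x) y] into Q/JP detects 1 ∈ JP. *)
Lemma IP_of_tensorL_zero (U : submod R^c^o) :
  tensorL_zero phi P [:: (\pi_(quotmod U) 1, 1)] -> IP phi (fun x : R => U x) P 1.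
Proof.
set J := fun x : R => U x.
pose b (m : quotmod U) (y : Q) :=
  \pi_(quotmod (IP_submod hP J)) (phi (repr m) * y : QR phi).
have IP_repr (m : quotmod U) x : m = \pi x -> IP phi J P (phi (repr m - x)).
  move/quotmod_repr => Ux; rewrite -[phi _]mulr1.
  exact: (IP_gen phi (J := J) Ux (subring_over1 hP)).
have bDl m m' y : P y -> b (m + m') y = b m y + b m' y.
  move=> Py; rewrite -linearD; apply/quotmod_eqP.
  rewrite /= -mulrDl -mulrBl -rmorphD -rmorphB; apply: (IPMr (J := J) hP _ Py).
  by apply: IP_repr; rewrite linearD /= !reprK.
have bDr m y y' : b m (y + y') = b m y + b m y' by rewrite /b -linearD /= mulrDr.
have bZ r m y : P y -> b ((r : R^c) *: m) y = b m (phi r * y).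
  move=> Py; apply/quotmod_eqP.
  rewrite /= mulrA -rmorphM -mulrBl -rmorphB; apply: (IPMr (J := J) hP _ Py).
  by apply: IP_repr; rewrite linearZ /= reprK.
move=> /(_ _ b bDl (fun m y y' _ _ => bDr m y y') bZ); rewrite big_seq1 /b /= mulr1.
move=> /quotmod_eq0 IP_repr1; have := IPB (J := J) hP IP_repr1 (IP_repr _ 1 erefl).
by rewrite -rmorphB subKr rmorph1.
Qed.

Hypothesis flP : flat_left phi P.

Lemma IP_ann_of_flat (M : lmodType R^c) (m : M) :
  tensorL_zero phi P [:: (m, 1)] -> IP phi (fun x : R => (x : R^c) *: m = 0) P 1.
Proof.
have e1 : coim_embed (\pi_(coim (cyclic_map m)) 1) = m.
  by rewrite coim_embedE; apply: scale1r.
rewrite -{1}e1 => tz; refine (IP_of_tensorL_zero (U := kersub (cyclic_map m)) _).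
refine (flP (coim_embed_inj (h := cyclic_map m)) (t := [:: (\pi 1, 1)]) _ tz).
by move=> p /[!inE] /eqP->; apply: (subring_over1 hP).
Qed.
End TensorVanishing.

(** * The filters E_{n+1} and the subrings Q_n *)

Section GabrielFilter.
Variables (R Q : nzRingType) (phi : {rmorphism R -> Q}).

Definition colon (I : R -> Prop) (q : Q) (x : R) : Prop :=
  exists2 s, I s & q * phi x = phi s.

Lemma right_idealI (I1 I2 : R -> Prop) :
  right_ideal I1 -> right_ideal I2 -> right_ideal (fun x => I1 x /\ I2 x).
Proof.
move=> [I1_0 I1B I1M] [I2_0 I2B I2M]; split=> // [x y [? ?] [? ?] | x r [? ?]].
  by split; [apply: I1B | apply: I2B].
by split; [apply: I1M | apply: I2M].
Qed.

Lemma right_ideal_colon I q : right_ideal I -> right_ideal (colon I q).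
Proof.
move=> [I0 IB IM]; split.
- by exists 0; rewrite ?rmorph0 ?mulr0.
- move=> x y [sx Isx ex] [sy Isy ey]; exists (sx - sy); first exact: IB.
  by rewrite !rmorphB mulrBr ex ey.
- move=> x r [sx Isx ex]; exists (sx * r); first exact: IM.
  by rewrite !rmorphM mulrA ex.
Qed.

Definition phi_submod (I : R -> Prop) (hI : right_ideal I) : submod (QR phi).
Proof.
refine (@Submod _ (QR phi) (fun q => exists2 i, I i & q = phi i) _ _ _);
  case: hI => I0 IB IM.
- by exists 0; rewrite ?rmorph0.
- by move=> _ _ [i Ii ->] [j Ij ->]; exists (i - j); rewrite ?rmorphB //; apply: IB.
- by move=> a _ [i Ii ->]; exists (i * a); rewrite ?rmorphM //; apply: IM.
Defined.

Variable P : Q -> Prop.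
Hypotheses (hP : subring_over phi P) (flP : flat_left phi P).

(* For b ∈ I2 with q φ(b) = φ(s), the class of φ(s) in Q/φ(I1) is killed only
   by x with b x ∈ I2 ∩ (I1 : q), and it vanishes in (Q/φ(I1)) ⊗ P because
   1 ∈ I1 P; flatness then puts φ(b) into (I2 ∩ (I1 : q)) P. *)
Lemma IP_colonI (I1 I2 : R -> Prop) q :
  right_ideal I1 -> right_ideal I2 -> IP phi I1 P 1 -> IP phi I2 P 1 ->
  (forall x, I2 x -> exists s, q * phi x = phi s) ->
  IP phi (fun x => I2 x /\ colon I1 q x) P 1.
Proof.
move=> hI1 hI2 IP1 IP2 qI2; apply: (IP_trans hP _ IP2) => b I2b.
rewrite -[phi b]mulr1; apply: IP_phiMl; have [s es] := qI2 b I2b.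
pose QI1 := quotmod (phi_submod hI1); pose m := \pi_QI1 (phi s : QR phi).
have ann_m x : (x : R^c) *: m = 0 -> I2 (b * x) /\ colon I1 q (b * x).
  rewrite -linearZ /= => /quotmod_eq0 [i Ii ei]; split; first by case: hI2 => _ _; apply.
  by exists i; rewrite // rmorphM mulrA es.
have tz : tensorL_zero phi P [:: (m, 1)].
  have -> : m = (s : R^c) *: \pi_QI1 (1 : QR phi) by rewrite -linearZ /= QR_scaleE mul1r.
  move=> A c cDl cDr cZ; rewrite big_seq1 /= cZ ?mulr1; last exact: (subring_over1 hP).
  have ann1 j : I1 j -> (j : R^c) *: \pi_QI1 (1 : QR phi) = 0.
    by move=> Ij; rewrite -linearZ; apply/quotmod_eq0; exists j; rewrite // QR_scaleE mul1r.
  have /(_ A c cDl cDr cZ) := tensorL_zero_ann hP ann1 IP1 (subring_over_phi hP s).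
  by rewrite big_seq1.
by move: (IP_ann_of_flat hP flP tz); apply: IP_sub => // x; apply: ann_m.
Qed.

Lemma E_next_colonI I1 I2 q : E_next phi P I1 -> E_next phi P I2 ->
  (forall x, I2 x -> exists s, q * phi x = phi s) ->
  E_next phi P (fun x => I2 x /\ colon I1 q x).
Proof.
move=> /(E_nextP hP)[hI1 IP1] /(E_nextP hP)[hI2 IP2] qI2; apply/(E_nextP hP); split.
  exact: right_idealI hI2 (right_ideal_colon q hI1).
exact: IP_colonI.
Qed.

Lemma R_E_subring : subring_over phi (R_E phi (E_next phi P)).
Proof.
split.
- move=> r; exists (fun _ => True); split; last by move=> x _; exists (r * x); rewrite rmorphM.
  apply/(E_nextP hP); split=> //; rewrite -[1]mulr1 -{1}(rmorph1 phi).
  exact: (IP_gen phi (J := fun _ => True) I (subring_over1 hP)).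
- move=> x y [I1 [EI1 xI1]] [I2 [EI2 yI2]]; exists (fun z => I2 z /\ colon I1 1 z).
  split; first by apply: E_next_colonI => // z _; exists z; rewrite mul1r.
  move=> z [/yI2[sy ey] [s /xI1[sx ex] ez]]; exists (sx - sy).
  by rewrite mulrBl ey -[phi z]mul1r ez ex rmorphB.
- move=> x y [I1 [EI1 xI1]] [I2 [EI2 yI2]]; exists (fun z => I2 z /\ colon I1 y z).
  split; first exact: E_next_colonI.
  by move=> z [_ [s /xI1[sx ex] ez]]; exists sx; rewrite -mulrA ez ex.
Qed.
End GabrielFilter.

Section QomegaSubring.
Variables (R Q : nzRingType) (phi : {rmorphism R -> Q}).
Hypothesis hC : condC phi.

Lemma Qn_subring n : subring_over phi (Qn phi n).
Proof. by elim: n => [|n IHn] //=; apply: R_E_subring IHn (hC IHn). Qed.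

Lemma Qomega_subring : subring_over phi (Qomega phi).
Proof.
split=> [r n | x y Sx Sy n | x y Sx Sy n].
- exact: subring_over_phi (Qn_subring n) r.
- exact: (subring_overB (Qn_subring n) (Sx n) (Sy n)).
- exact: (subring_overM (Qn_subring n) (Sx n) (Sy n)).
Qed.
End QomegaSubring.

(** * Epimorphisms *)

Section SubringType.
Variables (R Q : nzRingType) (phi : {rmorphism R -> Q}) (S : Q -> Prop).
Hypothesis hS : subring_over phi S.

(* The dummy argument makes subring_of, and hence its ring instance, depend on hS. *)
Definition subring_pred of subring_over phi S : {pred Q} := fun x => `[< S x >].

Fact subring_pred_closed : subring_closed (subring_pred hS).
Proof.
split=> [|x y /asboolP Sx /asboolP Sy|x y /asboolP Sx /asboolP Sy]; apply/asboolP.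
- exact: (subring_over1 hS).
- exact: (subring_overB hS Sx Sy).
- exact: (subring_overM hS Sx Sy).
Qed.
HB.instance Definition _ :=
  GRing.isSubringClosed.Build Q (subring_pred hS) subring_pred_closed.

Record subring_of := SubringOf {
  subring_val :> Q; _ : subring_val \in subring_pred hS }.
HB.instance Definition _ := [isSub for subring_val].
HB.instance Definition _ := [Choice of subring_of by <:].
HB.instance Definition _ := [SubChoice_isSubNzRing of subring_of by <:].

Lemma subring_valP (u : subring_of) : S (val u).
Proof. by case: u => x /= /asboolP. Qed.

Definition subring_ins (x : Q) : subring_of := insubd 0 x.

Lemma val_subring_ins x : S x -> val (subring_ins x) = x.
Proof. by move=> Sx; rewrite insubdK //; apply/asboolP. Qed.

Lemma subring_ins1 : subring_ins 1 = 1.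
Proof. by apply: val_inj; rewrite rmorph1 val_subring_ins //; apply: (subring_over1 hS). Qed.

Lemma subring_insD x y : S x -> S y -> subring_ins (x + y) = subring_ins x + subring_ins y.
Proof.
move=> Sx Sy; apply: val_inj; rewrite rmorphD /= !val_subring_ins //.
exact: (subring_overD hS).
Qed.

Lemma subring_insM x y : S x -> S y -> subring_ins (x * y) = subring_ins x * subring_ins y.
Proof.
move=> Sx Sy; apply: val_inj; rewrite rmorphM /= !val_subring_ins //.
exact: (subring_overM hS).
Qed.
End SubringType.

(* The trivial extension of B by the B-bimodule of biadditive forms on B,
   with (x F)(u, v) = F (u x) v and (F y)(u, v) = F u (y v). *)
Section TrivialExtension.
Variables (B : nzRingType) (A : zmodType).

Definition biadditive (F : B -> B -> A) :=
  (forall u u' v, F (u + u') v = F u v + F u' v) /\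
  (forall u v v', F u (v + v') = F u v + F u v').

Record trivext := Trivext {
  te_base : B; te_form : B -> B -> A; te_formP : biadditive te_form }.

Lemma trivext_eq (x y : trivext) :
  te_base x = te_base y -> te_form x =2 te_form y -> x = y.
Proof.
case: x y => [x F HF] [y G HG] /= <- FG.
have {}FG : F = G by apply/funext => u; apply/funext => v; apply: FG.
by subst G; rewrite (Prop_irrelevance HF HG).
Qed.

HB.instance Definition _ := gen_eqMixin trivext.
HB.instance Definition _ := gen_choiceMixin trivext.

Fact biadditive0 : biadditive (fun _ _ => 0).
Proof. by split=> *; rewrite addr0. Qed.
Fact biadditiveD F G :
  biadditive F -> biadditive G -> biadditive (fun u v => F u v + G u v).
Proof. by move=> [F1 F2] [G1 G2]; split=> *; rewrite ?F1 ?G1 ?F2 ?G2 addrACA. Qed.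
Fact biadditiveN F : biadditive F -> biadditive (fun u v => - F u v).
Proof. by move=> [F1 F2]; split=> *; rewrite ?F1 ?F2 opprD. Qed.
Fact biadditiveMl F x : biadditive F -> biadditive (fun u v => F (u * x) v).
Proof. by move=> [F1 F2]; split=> *; rewrite ?mulrDl ?F1 ?F2. Qed.
Fact biadditiveMr F y : biadditive F -> biadditive (fun u v => F u (y * v)).
Proof. by move=> [F1 F2]; split=> *; rewrite ?mulrDr ?F1 ?F2. Qed.

Definition te_zero := Trivext 0 biadditive0.
Definition te_one := Trivext 1 biadditive0.
Definition te_add x y :=
  Trivext (te_base x + te_base y) (biadditiveD (te_formP x) (te_formP y)).
Definition te_opp x := Trivext (- te_base x) (biadditiveN (te_formP x)).
Definition te_mul x y := Trivext (te_base x * te_base y)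
  (biadditiveD (biadditiveMl (te_base x) (te_formP y))
               (biadditiveMr (te_base y) (te_formP x))).

Fact te_addA : associative te_add.
Proof. by move=> x y z; apply: trivext_eq => /= [|u v]; rewrite addrA. Qed.
Fact te_addC : commutative te_add.
Proof. by move=> x y; apply: trivext_eq => /= [|u v]; rewrite addrC. Qed.
Fact te_add0 : left_id te_zero te_add.
Proof. by move=> x; apply: trivext_eq => /= [|u v]; rewrite add0r. Qed.
Fact te_addN : left_inverse te_zero te_opp te_add.
Proof. by move=> x; apply: trivext_eq => /= [|u v]; rewrite addNr. Qed.
Fact te_mulA : associative te_mul.
Proof. by move=> x y z; apply: trivext_eq => /= [|u v]; rewrite !mulrA ?addrA. Qed.
Fact te_mul1 : left_id te_one te_mul.
Proof. by move=> x; apply: trivext_eq => /= [|u v]; rewrite ?mul1r ?mulr1 ?addr0. Qed.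
Fact te_mulr1 : right_id te_one te_mul.
Proof. by move=> x; apply: trivext_eq => /= [|u v]; rewrite ?mulr1 ?mul1r ?add0r. Qed.
Fact te_mulDl : left_distributive te_mul te_add.
Proof.
move=> x y z; apply: trivext_eq => /= [|u v]; first by rewrite mulrDl.
by rewrite mulrDr (proj1 (te_formP z)) addrACA.
Qed.
Fact te_mulDr : right_distributive te_mul te_add.
Proof.
move=> x y z; apply: trivext_eq => /= [|u v]; first by rewrite mulrDr.
by rewrite mulrDl (proj2 (te_formP x)) addrACA.
Qed.
Fact te_one_neq0 : te_one != te_zero.
Proof. by apply/eqP => /(congr1 te_base)/eqP; rewrite oner_eq0. Qed.

HB.instance Definition _ := GRing.isNzRing.Build trivext te_addA te_addC te_add0
  te_addN te_mulA te_mul1 te_mulr1 te_mulDl te_mulDr te_one_neq0.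
End TrivialExtension.

(* ring_epi, applied to x ↦ (x, 0) and x ↦ (x, x b - b x) with values in the
   trivial extension, forces s b = b s. *)
Section EpiBalanced.
Variables (R Q : nzRingType) (phi : {rmorphism R -> Q}) (S : Q -> Prop).
Hypotheses (hS : subring_over phi S) (epi : ring_epi phi S).
Variables (A : zmodType) (b : Q -> Q -> A).
Hypotheses (bDl : forall x x' y, S x -> S x' -> S y -> b (x + x') y = b x y + b x' y)
  (bDr : forall x y y', S x -> S y -> S y' -> b x (y + y') = b x y + b x y')
  (bZ : forall r x y, S x -> S y -> b (x * phi r) y = b x (phi r * y)).

Local Notation B := (subring_of hS).
Local Notation ins := (subring_ins hS).

Let bB (u v : B) := b (val u) (val v).

Fact bB_biadditive : biadditive bB.
Proof. by split=> *; rewrite /bB rmorphD /= ?bDl ?bDr //; apply: subring_valP. Qed.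

Definition te_lift (x : Q) : trivext B A := Trivext (ins x) (biadditive0 B A).

Definition te_commutator (x : Q) : trivext B A := Trivext (ins x)
  (biadditiveD (biadditiveMl (ins x) bB_biadditive)
     (biadditiveN (biadditiveMr (ins x) bB_biadditive))).

Lemma rhom_te_lift : rhom_on S te_lift.
Proof.
split=> [|x y Sx Sy]; first by apply: trivext_eq; rewrite /= ?subring_ins1.
by split; apply: trivext_eq => /= [|u v]; rewrite ?subring_insD ?subring_insM ?addr0.
Qed.

Lemma rhom_te_commutator : rhom_on S te_commutator.
Proof.
split=> [|x y Sx Sy].
  by apply: trivext_eq => /= [|u v]; rewrite subring_ins1 ?mulr1 ?mul1r ?subrr.
split; apply: trivext_eq => /= [|u v]; rewrite ?subring_insD ?subring_insM //.
  by rewrite mulrDr mulrDl (proj1 bB_biadditive) (proj2 bB_biadditive) opprD addrACA.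
by rewrite !mulrA addrA subrK.
Qed.

Lemma te_lift_commutator_phi r : te_lift (phi r) = te_commutator (phi r).
Proof.
apply: trivext_eq => //= u v; rewrite /bB !rmorphM /= val_subring_ins ?bZ ?subrr //.
- exact: subring_valP.
- exact: subring_valP.
- exact: (subring_over_phi hS).
Qed.

Lemma epi_balanced s : S s -> b s 1 = b 1 s.
Proof.
move=> Ss; have := @epi _ _ _ rhom_te_lift rhom_te_commutator te_lift_commutator_phi s Ss.
move/(congr1 (fun x => te_form x 1 1)) => /=.
rewrite mul1r mulr1 /bB rmorph1 val_subring_ins //.
by move/eqP; rewrite eq_sym subr_eq0 => /eqP.
Qed.
End EpiBalanced.

Section QomegaEpi.
Variables (R Q : nzRingType) (phi : {rmorphism R -> Q}).

(* With 1 = Σ φ(i_k) q_k and s φ(i_k) = φ(r_k):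
   s ⊗ 1 = Σ φ(r_k) ⊗ q_k = 1 ⊗ s. *)
Lemma Qn1_tensorL_comm s : Qn phi 1 s ->
  tensorL_zero phi (fun _ => True) [:: (s : QR phi, 1); (- 1 : QR phi, s)].
Proof.
move=> [J [[_ [_ IPQ]] sJ]] A b bDl bDr bZ; have [t [tJ e1]] := IPQ 1 I.
rewrite big_cons big_seq1 /=.
have bN : b (- 1 : QR phi) s = - b (1 : QR phi) s.
  apply/eqP; rewrite -addr_eq0 -bDl // addNr; apply/eqP/(addrI (b 0 s)).
  by rewrite -bDl ?addr0.
suff -> : b (s : QR phi) 1 = b (1 : QR phi) s by rewrite bN addrN.
have bsum x := additive_on_sum (P := fun _ => True) (c := b x) I (fun _ _ _ _ => I)
  (fun y y' _ _ => bDr x y y' I I).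
have e_s : s = \sum_(p <- t) s * (phi p.1 * p.2) by rewrite -mulr_sumr -e1 mulr1.
rewrite [in LHS]e1 [in RHS]e_s !bsum //; apply: eq_big_seq => p /tJ[/sJ[r er] _].
have e : (p.1 : R^c) *: (s : QR phi) = (r : R^c) *: (1 : QR phi).
  exact: etrans er (esym (mul1r _)).
by rewrite -bZ // e bZ // mulrA er.
Qed.

Lemma tensorR_comm_of_flat_left (S : Q -> Prop) s :
  flat_left phi (fun _ => True) -> subring_over phi S -> S s ->
  tensorL_zero phi (fun _ => True) [:: (s : QR phi, 1); (- 1 : QR phi, s)] ->
  tensorR_zero phi S [:: (s, 1 : RQ phi); (- 1, s : RQ phi)].
Proof.
move=> flQ hS Ss tz; pose h := span2_map (1 : QR phi) (s : QR phi).
pose nN1 := \pi_(coim h) (-1, 0); pose ns := \pi_(coim h) (0, 1).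
have S_h (m : coim h) : S (coim_embed m).
  elim/quotW: m => -[a c]; rewrite coim_embedE /= /span2_map /= !QR_scaleE mul1r.
  exact: (subring_overD hS (subring_over_phi hS a)
                       (subring_overM hS Ss (subring_over_phi hS c))).
have eN1 : coim_embed nN1 = - 1.
  by rewrite coim_embedE /= /span2_map /= !QR_scaleE rmorph0 rmorphN1 mulr0 mulrN1 addr0.
have es : coim_embed ns = s.
  by rewrite coim_embedE /= /span2_map /= !QR_scaleE rmorph0 rmorph1 mulr0 mulr1 add0r.
have tz' : tensorL_zero phi (fun _ => True) [:: (ns, 1); (nN1, s)].
  refine (flQ _ _ _ (coim_embed_inj (h := h)) [:: (ns, 1); (nN1, s)] (fun _ _ => I) _).
  change (tensorL_zero phi (fun _ => True) [:: (coim_embed ns, 1); (coim_embed nN1, s)]).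
  by rewrite eN1 es.
move=> A b bDr bDl bZ; have := tz' A (fun m y => b (coim_embed m) y).
rewrite !big_cons !big_nil /= eN1 es; apply=> [m m' y _|m y y' _ _|r m y _].
- by rewrite linearD bDl //; exact: S_h.
- by rewrite bDr //; exact: S_h.
- by rewrite linearZ; apply: bZ; exact: S_h.
Qed.

Lemma rhom_onN1 (T : nzRingType) (S : Q -> Prop) (f : Q -> T) :
  subring_over phi S -> rhom_on S f -> f (- 1) = - 1.
Proof.
move=> hS [f1 fDM]; have S1 := subring_over1 hS; have SN1 := subring_overN hS S1.
have f0 : f 0 = 0.
  have [f00 _] := fDM 0 0 (subring_over0 hS) (subring_over0 hS).
  by apply/(addrI (f 0)); rewrite -f00 !addr0.
have [+ _] := fDM _ _ S1 SN1.
by rewrite addrN f0 f1 => /eqP; rewrite eq_sym addrC addr_eq0 => /eqP.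
Qed.

Lemma rhom_eq_of_tensorR_comm (S : Q -> Prop) s (T : nzRingType) (f g : Q -> T) :
  flat_right phi S -> subring_over phi S -> S s ->
  rhom_on S f -> rhom_on S g -> (forall r, f (phi r) = g (phi r)) ->
  tensorR_zero phi S [:: (s, 1 : RQ phi); (- 1, s : RQ phi)] -> f s = g s.
Proof.
move=> flS hS Ss hf hg fg tz; pose h := span2_map (1 : RQ phi) (s : RQ phi).
pose m1 := \pi_(coim h) (1, 0); pose ms := \pi_(coim h) (0, 1).
have S_h (m : coim h) : S (coim_embed m).
  elim/quotW: m => -[a c]; rewrite coim_embedE /= /span2_map /= !RQ_scaleE mulr1.
  exact: (subring_overD hS (subring_over_phi hS a)
                       (subring_overM hS (subring_over_phi hS c) Ss)).
have e1 : coim_embed m1 = 1.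
  by rewrite coim_embedE /= /span2_map /= !RQ_scaleE rmorph0 rmorph1 mul0r mulr1 addr0.
have es : coim_embed ms = s.
  by rewrite coim_embedE /= /span2_map /= !RQ_scaleE rmorph0 rmorph1 mul0r mul1r add0r.
have SN1 := subring_overN hS (subring_over1 hS).
have tz' : tensorR_zero phi S [:: (s, m1); (- 1, ms)].
  refine (flS _ _ _ (coim_embed_inj (h := h)) [:: (s, m1); (- 1, ms)] _ _).
    by move=> p /[!inE] /orP[] /eqP->.
  change (tensorR_zero phi S [:: (s, coim_embed m1); (- 1, coim_embed ms)]).
  by rewrite e1 es.
pose b x (m : coim h) := f x * g (coim_embed m).
have bDr x m m' : S x -> b x (m + m') = b x m + b x m'.
  by move=> _; rewrite /b linearD (hg.2 _ _ (S_h m) (S_h m')).1 mulrDr.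
have bDl x x' m : S x -> S x' -> b (x + x') m = b x m + b x' m.
  by move=> Sx Sx'; rewrite /b (hf.2 _ _ Sx Sx').1 mulrDl.
have bZ r x m : S x -> b (x * phi r) m = b x (r *: m).
  move=> Sx; rewrite /b linearZ (hf.2 _ _ Sx (subring_over_phi hS r)).2 fg -mulrA.
  by rewrite -(hg.2 _ _ (subring_over_phi hS r) (S_h m)).2.
move: (tz' T b bDr bDl bZ); rewrite !big_cons !big_nil /b e1 es.
by rewrite (rhom_onN1 hS hf) mulN1r addr0 hg.1 mulr1 => /eqP; rewrite subr_eq0 => /eqP.
Qed.
End QomegaEpi.

Section Qtot.
Variables (R Q : nzRingType) (phi : {rmorphism R -> Q}).
Hypothesis hC : condC phi.

Lemma Qomega_epi : condC' phi -> ring_epi phi (Qomega phi).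
Proof.
move=> hC' T f g hf hg fg s Ss; have hS := Qomega_subring hC.
have flQ : flat_left phi (fun _ => True) by apply: hC.
have tz := tensorR_comm_of_flat_left flQ hS Ss (Qn1_tensorL_comm (Ss 1%N)).
exact: rhom_eq_of_tensorR_comm (hC' _ hS) hS Ss hf hg fg tz.
Qed.

Lemma flat_epi_sub_Qomega S : flat_epi_subring phi S -> forall q, S q -> Qomega phi q.
Proof.
case=> hS epi flS q Sq n; elim: n q Sq => [//|n IHn] q Sq /=.
have hT : right_ideal (fun _ : R => True) by [].
exists (colon phi (fun _ => True) q); split; last by move=> x [s _ e]; exists s.
apply/(E_nextP (Qn_subring hC n)); split; first exact: (right_ideal_colon phi q hT).
pose QmodR := quotmod (phi_submod phi hT).
have tz : tensorL_zero phi S [:: (\pi_QmodR (q : QR phi), 1)].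
  move=> A c cDl cDr cZ; rewrite big_seq1 /=.
  pose b x y := c (\pi_QmodR (x : QR phi)) y; change (b q 1 = 0).
  rewrite (epi_balanced hS epi (b := b)) // => [|x x' y _ _ Sy|x y y' _ Sy Sy'|r x y _ Sy].
  - have pi1 : \pi_QmodR 1 = 0 by apply/quotmod_eq0; rewrite /=; exists 1; rewrite ?rmorph1.
    by rewrite /b pi1; apply/(addrI (c 0 q)); rewrite -cDl ?addr0.
  - by rewrite /b linearD cDl.
  - by rewrite /b cDr.
  - by rewrite /b -cZ // -linearZ.
move: (IP_ann_of_flat hS flS tz); apply: IP_sub => [x | y /IHn //].
by rewrite -linearZ => /quotmod_eq0[s _ e]; exists s.
Qed.
End Qtot.

(** * Commutative rings *)

Section Commutative.
Variables (R : comNzRingType) (Q : nzRingType) (phi : {rmorphism R -> Q}).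

(* If d := φ(r) q - q φ(r) were nonzero, rationality would give x with
   d φ(x) ≠ 0 and q φ(x) = φ(s); but d φ(x) = φ(r s) - φ(s r). *)
Lemma Qmax_central : is_Qmax phi -> forall r q, phi r * q = q * phi r.
Proof.
case=> _ rational _ r q; apply/eqP; rewrite -subr_eq0; apply/negPn/negP => /rational.
move=> /(_ q)[x [+ [s es]]]; apply/negP/negPn/eqP.
rewrite mulrBl -!mulrA es -!rmorphM [r * x]mulrC [phi (x * r)]rmorphM mulrA es.
by rewrite -rmorphM [s * r]mulrC subrr.
Qed.

Definition cmod (M : lmodType R) : Type := M.

Section CmodInstances.
Variable M : lmodType R.
HB.instance Definition _ := GRing.Zmodule.on (cmod M).
Definition cmod_scale (r : R^c) (m : cmod M) : cmod M := (r : R) *: (m : M).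
Fact cmod_scaleA a b (m : cmod M) :
  cmod_scale a (cmod_scale b m) = cmod_scale (a * b) m.
Proof. by rewrite /cmod_scale scalerA mulrC. Qed.
Fact cmod_scale1 : left_id 1 cmod_scale.
Proof. exact: scale1r. Qed.
Fact cmod_scaleDr : right_distributive cmod_scale +%R.
Proof. by move=> a u v; rewrite /cmod_scale scalerDr. Qed.
Fact cmod_scaleDl (m : cmod M) : {morph cmod_scale^~ m : a b / a + b}.
Proof. by move=> a b; rewrite /cmod_scale scalerDl. Qed.
HB.instance Definition _ := GRing.Zmodule_isLmodule.Build R^c (cmod M)
  cmod_scaleA cmod_scale1 cmod_scaleDr cmod_scaleDl.
End CmodInstances.

Section CmodMap.
Variables (M N : lmodType R) (g : {linear M -> N}).
Definition cmod_map : cmod M -> cmod N := g.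
Fact cmod_map_is_linear : linear cmod_map.
Proof. by move=> a x y; exact: (linearP g a x y). Qed.
HB.instance Definition _ :=
  GRing.isLinear.Build R^c (cmod M) (cmod N) *:%R cmod_map cmod_map_is_linear.
End CmodMap.

Hypothesis central : forall r q, phi r * q = q * phi r.

Lemma tensorR_zero_cmod S (M : lmodType R) (t : seq (Q * M)) :
  tensorR_zero phi S t <-> tensorL_zero phi S [seq ((p.2 : cmod M), p.1) | p <- t].
Proof.
split=> tz A b bD1 bD2 bZ.
  rewrite big_map; apply: (tz A (fun x m => b m x)) => [x m m' Sx|x x' m Sx Sx'|r x m Sx].
  - exact: bD1.
  - exact: bD2.
  - by rewrite -central bZ.
have := tz A (fun m x => b x m); rewrite big_map.
apply=> [m m' x Sx|m x x' Sx Sx'|r m x Sx].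
- exact: bD1.
- exact: bD2.
- by rewrite central bZ.
Qed.

Lemma condC'_of_comm : condC phi -> condC' phi.
Proof.
move=> hC S hS M N g ginj t tS /tensorR_zero_cmod tz; apply/tensorR_zero_cmod.
refine (hC S hS _ _ (cmod_map g) ginj _ _ _); first by move=> _ /mapP[p /tS Sp ->].
by move: tz; rewrite -!map_comp.
Qed.
End Commutative.

Theorem proposition5p1 :
  (forall (R Q : nzRingType) (phi : {rmorphism R -> Q}),
      is_Qmax phi -> condC phi -> condC' phi -> is_Qtot phi (Qomega phi)) /\
  (forall (R : comNzRingType) (Q : nzRingType) (phi : {rmorphism R -> Q}),
      is_Qmax phi -> condC phi -> is_Qtot phi (Qomega phi)).
Proof.
have Qomega_Qtot (R Q : nzRingType) (phi : {rmorphism R -> Q}) :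
    condC phi -> condC' phi -> is_Qtot phi (Qomega phi).
  move=> hC hC'; split; last exact: flat_epi_sub_Qomega.
  by split; [exact: Qomega_subring | exact: Qomega_epi | exact: hC (Qomega_subring hC)].
(* is_Qmax is needed only in the commutative case, to make φ(R) central. *)
split=> [R Q phi _ | R Q phi hQ hC]; first exact: Qomega_Qtot.
exact/Qomega_Qtot/(condC'_of_comm (Qmax_central hQ)).
Qed.
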